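(* Let $s,t$ be positive integers with $\gcd(s,t)=1$, and define the quadratic polynomials $$A=x^2-(3s+t)(3s+2t),\qquad B=x^2-6s\,x+(3s-2t)(3s+t),\qquad C=x^2+6(s+t)\,x+(3s+2t)(3s+5t).$$ Let $P=A^{2s+t}$ and $Q=B^{s+t}C^{s}$ (both of degree $n=4s+2t$). Then $$\deg(P-Q)\le n-5.$$
   Context: This is the Davenport–Zannier pair for the ''fork'' weighted tree (two black vertices of degree $2s+t$, two white vertices of degree $s+t$, two white vertices of degree $s$); $n-5=(n+1)-(p+q)$ with $p=2$, $q=4$ is the minimal possible degree of $P-Q$. *)

From mathcomp Require Import all_boot all_order all_algebra.
Set Implicit Arguments. Unset Strict Implicit. Unset Printing Implicit Defensive.
Import GRing.Theory Num.Theory.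
Local Open Scope ring_scope.

Definition forkA (s t : nat) : {poly int} :=
  'X^2 - (((3 * s + t) * (3 * s + 2 * t))%N)%:R%:P.
Definition forkB (s t : nat) : {poly int} :=
  'X^2 - (6 * s)%:R *: 'X + (((3 * s)%:R - (2 * t)%:R) * ((3 * s + t)%N)%:R)%:P.
Definition forkC (s t : nat) : {poly int} :=
  'X^2 + (6 * (s + t))%:R *: 'X + (((3 * s + 2 * t) * (3 * s + 5 * t))%N)%:R%:P.

(* The Wronskian [W(p, q) = p' q - p q'] of two polynomials of different degrees
   [d] and [e] has degree exactly [d + e - 1], and [W(p - q, q) = W(p, q)].
   For [P = A^(2s+t)] and [Q = B^(s+t) C^s] we have
   [W(P, Q) = A^(2s+t-1) B^(s+t-1) C^(s-1) ((2s+t) A' B C - (s+t) A B' C - s A B C')],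
   and for these particular quadratics the last factor is a constant, so [W(P, Q)]
   has degree at most [2n - 6].  As [P] and [Q] are monic of degree [n], [P - Q]
   has degree [d < n], hence [d + n - 1 <= 2n - 6]. *)

From mathcomp Require Import all_boot all_order all_algebra.
From mathcomp Require Import ring zify.
Set Implicit Arguments. Unset Strict Implicit. Unset Printing Implicit Defensive.
Import GRing.Theory Num.Theory.
Local Open Scope ring_scope.

Lemma coefM_top (R : nzSemiRingType) (p q : {poly R}) m k :
  (size p <= m.+1)%N -> (size q <= k.+1)%N -> (p * q)`_(m + k) = p`_m * q`_k.
Proof.
move=> sz_p sz_q; rewrite coefM (bigD1 (Ordinal (leq_addr k m.+1))) //= addKn.
rewrite big1 ?addr0 // => -[j lt_j] /= ne_jm.
have [lt_jm | lt_mj | eq_jm] := ltngtP j m.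
- by rewrite (nth_default _ (leq_trans sz_q _)) ?mulr0 //; lia.
- by rewrite (nth_default _ (leq_trans sz_p lt_mj)) ?mul0r.
- by rewrite -(inj_eq val_inj) /= eq_jm eqxx in ne_jm.
Qed.

Lemma size_sub_monic (R : nzRingType) (p q : {poly R}) :
  p \is monic -> q \is monic -> size p = size q -> (size (p - q)%R < size p)%N.
Proof.
move=> mon_p mon_q eq_pq; have := monic_neq0 mon_p; rewrite -size_poly_gt0.
case def_p: (size p) => [//|m] _; apply/leq_sizeP => j; rewrite coefB.
rewrite leq_eqVlt => /orP[/eqP<- | lt_mj].
  have coef_m (r : {poly R}) : size r = m.+1 -> r`_m = lead_coef r.
    by rewrite lead_coefE => ->.
  by rewrite !coef_m -?eq_pq // (monicP mon_p) (monicP mon_q) subrr.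
by rewrite !nth_default ?subrr // -?eq_pq def_p.
Qed.

Lemma size_monic_XnD (R : nzRingType) n (r : {poly R}) :
  (size r <= n)%N -> size ('X^n + r) = n.+1 /\ 'X^n + r \is monic.
Proof.
move=> sz_r; have lt_r : (size r < size ('X^n : {poly R}))%N by rewrite size_polyXn.
by rewrite size_polyDl // size_polyXn monicE lead_coefDl // lead_coefXn.
Qed.

Lemma size_monic_quadratic (R : nzRingType) (b c : R) :
  size ('X^2 + b *: 'X + c%:P) = 3 /\ 'X^2 + b *: 'X + c%:P \is monic.
Proof.
rewrite -addrA; apply: size_monic_XnD; apply: leq_trans (size_polyD _ _) _.
rewrite geq_max (leq_trans (size_scale_leq _ _)) ?size_polyX //.
exact: leq_trans (size_polyC_leq1 c) _.
Qed.

Lemma size_monic_exp (R : nzRingType) (p : {poly R}) n :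
  p \is monic -> size (p ^+ n) = ((size p).-1 * n).+1.
Proof.
move=> mon_p; elim: n => [|n IHn]; first by rewrite expr0 size_poly1 muln0.
rewrite exprS size_monicM ?monic_neq0 ?monic_exp // IHn mulnS.
have := size_poly_gt0 p; rewrite monic_neq0 //; case: (size p) => //= m _.
by rewrite addnS.
Qed.

Definition wronskian {R : nzRingType} (p q : {poly R}) := p^`() * q - p * q^`().

Lemma coef_wronskian_top (R : nzRingType) (p q : {poly R}) m k :
  (size p <= m.+2)%N -> (size q <= k.+1)%N ->
  (wronskian p q)`_(m + k) = (p`_m.+1 * q`_k) *+ m.+1 - (p`_m.+1 * q`_k) *+ k.
Proof.
move=> sz_p sz_q; have sz_p' : (size p^`() <= m.+1)%N.
  apply/leq_sizeP => j le_mj; rewrite coef_deriv nth_default ?mul0rn //.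
  exact: leq_trans sz_p _.
rewrite coefB coefM_top // coef_deriv -mulrnAl; congr (_ - _).
case: k sz_q => [|k] sz_q.
  by rewrite addn0 (size1_polyC sz_q) derivC mulr0 coef0 mulr0n.
have sz_q' : (size q^`() <= k.+1)%N.
  apply/leq_sizeP => j le_kj; rewrite coef_deriv nth_default ?mul0rn //.
  exact: leq_trans sz_q _.
by rewrite -addSnnS coefM_top // coef_deriv mulrnAr.
Qed.

Lemma wronskian_swap (R : comNzRingType) (p q : {poly R}) :
  wronskian q p = - wronskian p q.
Proof. by rewrite /wronskian opprB mulrC [q * _]mulrC. Qed.

Lemma size_wronskian (R : numDomainType) (p q : {poly R}) :
  p != 0 -> q != 0 -> size p != size q ->
  size (wronskian p q) = (size p + size q).-2.
Proof.
wlog lt1p : p q / (1 < size p)%N => [wlog_p nz_p nz_q neq_pq | ].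
  have [/wlog_p-> // | le_p1] := ltnP 1 (size p).
  rewrite wronskian_swap size_polyN addnC wlog_p // 1?eq_sym //.
  have := size_poly_gt0 q; have := size_poly_gt0 p; rewrite nz_p nz_q.
  by move: neq_pq le_p1; lia.
move=> nz_p nz_q neq_pq.
have [m def_p] : exists m, size p = m.+2 by exists (size p).-2; lia.
have [k def_q] : exists k, size q = k.+1.
  by exists (size q).-1; rewrite prednK // size_poly_gt0.
rewrite def_p def_q addSn addnS /=; apply/eqP; rewrite eqn_leq; apply/andP; split.
  rewrite /wronskian; apply: leq_trans (size_polyD _ _) _; rewrite size_polyN geq_max.
  have lt_deriv (r : {poly R}) : r != 0 -> (size r^`() <= (size r).-1)%N.
    by move/lt_size_deriv; lia.
  apply/andP; split; apply: leq_trans (size_polyMleq _ _) _.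
    by rewrite def_q addnS leq_add2r (leq_trans (lt_deriv p nz_p)) ?def_p.
  by rewrite def_p addSn leq_add2l (leq_trans (lt_deriv q nz_q)) ?def_q.
rewrite ltnNge; apply/negP => /leq_sizeP/(_ (m + k) (leqnn _))/eqP; apply/negP.
have lc_p := lead_coefE p; have lc_q := lead_coefE q.
rewrite def_p def_q /= in lc_p lc_q.
rewrite (coef_wronskian_top (eq_leq def_p) (eq_leq def_q)) -lc_p -lc_q.
rewrite -[_ *+ m.+1]mulr_natr -[_ *+ k]mulr_natr -mulrBr.
rewrite !mulf_neq0 ?lead_coef_eq0 ?subr_eq0 ?eqr_nat //.
by rewrite def_p def_q eqSS in neq_pq.
Qed.

Lemma wronskianBl (R : comNzRingType) (p q : {poly R}) :
  wronskian (p - q) q = wronskian p q.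
Proof. by rewrite /wronskian derivB; ring. Qed.

Lemma wronskian_exp (R : comNzRingType) (a b c : nat) (A B C : {poly R}) :
  (0 < a)%N -> (0 < b)%N -> (0 < c)%N ->
  wronskian (A ^+ a) (B ^+ b * C ^+ c) =
  A ^+ a.-1 * B ^+ b.-1 * C ^+ c.-1 * (a%:R * A^`() * B * C
    - b%:R * A * B^`() * C - c%:R * A * B * C^`()).
Proof.
case: a => // a _; case: b => // b _; case: c => // c _.
rewrite /wronskian !(derivM, deriv_exp) !succnK !exprS.
move: (A^`()) (B^`()) (C^`()) (A ^+ a) (B ^+ b) (C ^+ c) => A' B' C' Aa Bb Cc.
ring.
Qed.

Lemma size_sub_monic_wronskian (R : numDomainType) (p q : {poly R}) :
  p \is monic -> q \is monic -> size p = size q -> p != q ->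
  (size (p - q)%R + size q)%N = (size (wronskian p q)).+2.
Proof.
move=> mon_p mon_q eq_pq neq_pq; have lt_pq := size_sub_monic mon_p mon_q eq_pq.
rewrite -wronskianBl size_wronskian ?subr_eq0 ?monic_neq0 //; last first.
  by rewrite -eq_pq neq_ltn lt_pq.
have sz_pq : (0 < size (p - q)%R)%N by rewrite size_poly_gt0 subr_eq0.
have sz_q : (0 < size q)%N by rewrite size_poly_gt0 monic_neq0.
move: sz_pq sz_q; case: (size (p - q)%R) => // d _; case: (size q) => // k _.
by rewrite addSn addnS.
Qed.

Section Fork.
Variables s t : nat.
Local Notation A := (forkA s t).
Local Notation B := (forkB s t).
Local Notation C := (forkC s t).

Lemma size_monic_forkA : size A = 3 /\ A \is monic.
Proof.
have -> : A = 'X^2 + 0 *: 'X + (- ((3 * s + t) * (3 * s + 2 * t))%N%:R)%:P.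
  by rewrite scale0r addr0 polyCN.
exact: size_monic_quadratic.
Qed.

Lemma size_monic_forkB : size B = 3 /\ B \is monic.
Proof. by rewrite /forkB -scaleNr; apply: size_monic_quadratic. Qed.

Lemma size_monic_forkC : size C = 3 /\ C \is monic.
Proof. exact: size_monic_quadratic. Qed.

Definition fork_const : int :=
  - 72 * s%:R * t%:R * (18 * s%:R ^+ 4 + 45 * s%:R ^+ 3 * t%:R
     + 40 * s%:R ^+ 2 * t%:R ^+ 2 + 15 * s%:R * t%:R ^+ 3 + 2 * t%:R ^+ 4).

Lemma fork_wronskian_factor :
  (2 * s + t)%:R * A^`() * B * C - (s + t)%:R * A * B^`() * C
    - s%:R * A * B * C^`() = fork_const%:P.
Proof. rewrite /forkA /forkB /forkC /fork_const !derivE -!mul_polyC. ring. Qed.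

Lemma size_fork_prod a b c : size (A ^+ a * B ^+ b * C ^+ c) = (2 * (a + b + c)).+1.
Proof.
have [szA monA] := size_monic_forkA; have [szB monB] := size_monic_forkB.
have [szC monC] := size_monic_forkC.
rewrite !size_monicM ?monic_neq0 ?monic_exp ?monicMl ?monic_exp //.
rewrite !size_monic_exp // szA szB szC /=; lia.
Qed.

Lemma fork_wronskian : (0 < s)%N -> (0 < t)%N ->
  wronskian (A ^+ (2 * s + t)) (B ^+ (s + t) * C ^+ s) =
  A ^+ (2 * s + t).-1 * B ^+ (s + t).-1 * C ^+ s.-1 * fork_const%:P.
Proof.
by move=> s_gt0 t_gt0; rewrite wronskian_exp ?fork_wronskian_factor ?addn_gt0 ?s_gt0.
Qed.

Lemma size_fork_wronskian : (0 < s)%N -> (0 < t)%N ->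
  (size (wronskian (A ^+ (2 * s + t)) (B ^+ (s + t) * C ^+ s)) <= 8 * s + 4 * t - 5)%N.
Proof.
move=> s_gt0 t_gt0; rewrite fork_wronskian //.
rewrite mulrC mul_polyC (leq_trans (size_scale_leq _ _)) // size_fork_prod; lia.
Qed.

End Fork.

Theorem mainTheorem2 (s t : nat) (hs : (0 < s)%N) (ht : (0 < t)%N)
    (hst : div.coprime s t) :
  let n := (4 * s + 2 * t)%N in
  let P := forkA s t ^+ (2 * s + t) in
  let Q := forkB s t ^+ (s + t) * forkC s t ^+ s in
  let D : {poly int} := P - Q in (size D <= n - 4)%N.
Proof.
cbv zeta.
have [size_A mon_A] := size_monic_forkA s t.
have [_ mon_B] := size_monic_forkB s t; have [_ mon_C] := size_monic_forkC s t.
set P := forkA s t ^+ _; set Q := forkB s t ^+ _ * _.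
have size_P : size P = (4 * s + 2 * t).+1 by rewrite size_monic_exp // size_A; lia.
have size_Q : size Q = (4 * s + 2 * t).+1.
  by rewrite -[Q]mul1r -(expr0 (forkA s t)) mulrA size_fork_prod; lia.
have mon_P : P \is monic by exact: monic_exp.
have mon_Q : Q \is monic by rewrite monicMl ?monic_exp.
have [-> | neq_PQ] := eqVneq P Q; first by rewrite subrr size_poly0.
have le_W : (size (wronskian P Q) <= 8 * s + 4 * t - 5)%N.
  exact: size_fork_wronskian.
have eq_W : (size (P - Q)%R + size Q)%N = (size (wronskian P Q)).+2.
  by apply: size_sub_monic_wronskian; rewrite ?size_P ?size_Q.
rewrite size_Q in eq_W; lia.
Qed.
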